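(* Let $q$ be a prime power, $n\ge1$, let $f(x)\in\mathbb{F}_{q^n}[x]$ be a permutation polynomial of $\mathbb{F}_{q^n}$, and let $h_1,\dots,h_n\in\mathbb{F}_q[x]$. For $a_1,\dots,a_n,v_1,\dots,v_n\in\mathbb{F}_{q^n}$, the polynomial $$F(x)=a_1h_1(\mathrm{Tr}(v_1f(x)))+\dots+a_nh_n(\mathrm{Tr}(v_nf(x)))$$ is a permutation polynomial of $\mathbb{F}_{q^n}$ if and only if (i) both $\{a_1,\dots,a_n\}$ and $\{v_1,\dots,v_n\}$ are bases of $\mathbb{F}_{q^n}$ over $\mathbb{F}_q$, and (ii) each $h_i$, $1\le i\le n$, is a permutation polynomial of $\mathbb{F}_q$.
   Context: $\mathrm{Tr}(x)=x+x^q+\dots+x^{q^{n-1}}$ is the trace from $\mathbb{F}_{q^n}$ to $\mathbb{F}_q$. A polynomial is a permutation polynomial of a finite field if the map it induces on that field is bijective. *)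

From HB Require Import structures.
From mathcomp Require Import all_boot all_order all_algebra all_field.
Set Implicit Arguments. Unset Strict Implicit. Unset Printing Implicit Defensive.
Import GRing.Theory.
Local Open Scope ring_scope.

Definition is_pp (R : nzRingType) (p : {poly R}) : Prop :=
  bijective (fun x : R => p.[x]).

(* Trace Tr(y) = y + y^q + ... + y^(q^(n-1)) with q = #|F|, applied formally
   to a polynomial argument (so Tr(v f(x)) is a polynomial in x). *)
Definition trP (F : finFieldType) (L : fieldExtType F) (n : nat)
    (p : {poly L}) : {poly L} :=
  \sum_(i < n) p ^+ (#|F| ^ i)%N.

Definition bigF (F : finFieldType) (L : fieldExtType F) (n : nat)
    (f : {poly L}) (h : 'I_n -> {poly F}) (a v : 'I_n -> L) : {poly L} :=
  \sum_(i < n) a i *: (map_poly (in_alg L) (h i) \Po trP n (v i *: f)).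

From HB Require Import structures.
From mathcomp Require Import all_boot all_order all_algebra all_field.
Set Implicit Arguments. Unset Strict Implicit. Unset Printing Implicit Defensive.
Import GRing.Theory.
Local Open Scope ring_scope.

(* (bigF f h a v).[x] = A (H (T f.[x])), where T y = (Tr (v_i y))_i maps L to
   F^n, H applies the h_i coordinatewise, and A u = \sum_i u_i a_i maps F^n back
   to L. All these sets have q^n elements, so bigF f h a v permutes L iff every
   factor is bijective:
   A is iff the a_i form a basis, H is iff every h_i permutes F, and T is iff
   the v_i form a basis, because the trace form (x, y) |-> Tr (x y) is
   nondegenerate. *)

Section AbsoluteTrace.
Variables (F : finFieldType) (L : fieldExtType F).
Local Notation q := #|F|.
Local Notation K := (finvect_type L).

Lemma pchar_nat_card_pow k : [pchar L].-nat (q ^ k)%N.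
Proof.
have [p p_pr pcharFp] := finPcharP F.
rewrite (eq_pnat _ (pchar_lalg L)) (eq_pnat _ (pcharf_eq pcharFp)).
by rewrite (card_pprimeChar pcharFp) -expnM pnatX pnat_id ?orbT.
Qed.

Lemma exprD_card_pow k (x y : L) :
  (x + y) ^+ (q ^ k)%N = x ^+ (q ^ k)%N + y ^+ (q ^ k)%N.
Proof. exact/exprDn_pchar/pchar_nat_card_pow. Qed.

Lemma expr_sum_card (I : Type) (r : seq I) (G : I -> L) :
  (\sum_(i <- r) G i) ^+ q = \sum_(i <- r) G i ^+ q.
Proof.
apply: (big_morph (fun x : L => x ^+ q)); first exact: (exprD_card_pow 1).
by rewrite expr0n gtn_eqF // ltnW // finNzRing_gt1.
Qed.

Lemma alg_expr_card_pow k (c : F) : (c%:A : L) ^+ (q ^ k)%N = c%:A.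
Proof.
elim: k => [|k IH]; first by rewrite expr1.
by rewrite expnSr exprM IH -[c%:A]/(in_alg L c) -rmorphXn expf_card.
Qed.

Lemma expr_card_pow_dim (x : L) : x ^+ (q ^ \dim {:L})%N = x.
Proof.
by have := Fermat's_little_theorem (fullv : {subfield L}) x; rewrite memvf => /esym/eqP.
Qed.

Lemma mem1v_expr_card (x : L) : x ^+ q = x -> x \in 1%VS.
Proof.
by move=> xq; rewrite (Fermat's_little_theorem (1%AS : {subfield L})) dimv1 expn1 xq.
Qed.

Lemma card_finvect : #|K| = (q ^ \dim {:L})%N.
Proof. by have := @card_vspacef F K (Vector.class K); rewrite card_vspace. Qed.

Definition Tr (x : L) : L := \sum_(i < \dim {:L}) x ^+ (q ^ i)%N.

Lemma TrD x y : Tr (x + y) = Tr x + Tr y.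
Proof. by rewrite /Tr -big_split; apply: eq_bigr => i _; rewrite exprD_card_pow. Qed.

Lemma TrZ (c : F) x : Tr (c *: x) = c *: Tr x.
Proof.
rewrite /Tr scaler_sumr; apply: eq_bigr => i _.
by rewrite -mulr_algl exprMn alg_expr_card_pow mulr_algl.
Qed.

(* The Frobenius map x |-> x ^+ q permutes the summands of Tr x cyclically. *)
Lemma Tr_mem1 x : Tr x \in 1%VS.
Proof.
apply: mem1v_expr_card; rewrite /Tr expr_sum_card.
have := expr_card_pow_dim x; have := adim_gt0 (fullv : {subfield L}).
case: (\dim {:L}) => // m _ xqm.
under eq_bigr => i _ do rewrite -exprM -expnSr.
rewrite big_ord_recr big_ord_recl /= xqm expn0 expr1 addrC.
by congr (_ + _); apply: eq_bigr.
Qed.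

Lemma horner_trP m (p : {poly L}) x :
  (trP m p).[x] = \sum_(i < m) p.[x] ^+ (q ^ i)%N.
Proof. by rewrite horner_sum; apply: eq_bigr => i _; rewrite horner_exp. Qed.

Lemma size_trP_X m : size (trP m.+1 'X : {poly L}) = (q ^ m).+1.
Proof.
elim: m => [|m IH]; first by rewrite /trP big_ord1 expn0 expr1 size_polyX.
rewrite /trP big_ord_recr /= -/(trP m.+1 'X) addrC size_polyDl size_polyXn //.
by rewrite IH ltnS ltn_exp2l ?finNzRing_gt1.
Qed.

(* Tr is a polynomial function of degree q ^ (dim - 1) < #|L|. *)
Lemma Tr_neq0 : exists z : L, Tr z != 0.
Proof.
have [z Trz | Tr0] := pickP (fun z : K => Tr z != 0); first by exists z.
have [m dimL] : exists m, \dim {:L} = m.+1.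
  by exists (\dim {:L}).-1; rewrite prednK ?adim_gt0.
have P0 : trP m.+1 'X != 0 :> {poly L} by rewrite -size_poly_eq0 size_trP_X.
have roots : all (root (trP m.+1 'X)) (enum K).
  apply/allP => z _; rewrite rootE horner_trP hornerX -dimL.
  exact: negbFE (Tr0 z).
have := max_poly_roots P0 roots (enum_uniq K).
rewrite (_ : size (enum K) = #|K|); last by rewrite cardE.
by rewrite card_finvect dimL size_trP_X ltnS leqNgt ltn_exp2l ?ltnSn ?finNzRing_gt1.
Qed.

(* Since Tr x lies in F%:A (Tr_mem1), the default 0 of the pick is never used. *)
Definition trF (x : L) : F^o := odflt 0 [pick c | c%:A == Tr x].

Lemma trFE x : (trF x)%:A = Tr x.
Proof.
rewrite /trF; case: pickP => [c /eqP // | noc].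
by have /vlineP [c Trx] := Tr_mem1 x; move: (noc c); rewrite Trx eqxx.
Qed.

Lemma trF_is_linear : linear trF.
Proof.
move=> c x y; apply: (fmorph_inj (in_alg L)) => /=.
by rewrite scalerDl -scalerA !trFE TrD TrZ.
Qed.

HB.instance Definition _ := GRing.isLinear.Build F L F^o *:%R trF trF_is_linear.

Lemma trF_nondegenerate (y : L) : y != 0 -> exists w : L, trF (w * y) != 0.
Proof.
move=> y0; have [z Trz] := Tr_neq0.
exists (z / y); rewrite mulfVK //; apply: contra Trz => /eqP trz.
by rewrite -trFE trz scale0r.
Qed.

End AbsoluteTrace.

Lemma bij_decomp_card (X Y Z : finType) (f : X -> Y) (g : Y -> Z) :
  #|X| = #|Y| -> bijective (g \o f) -> bijective g /\ bijective f.
Proof.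
move=> cardXY gf_bij.
have f_bij : bijective f.
  by apply: inj_card_bij; [exact: inj_compr (bij_inj gf_bij) | rewrite cardXY].
split=> //; have [f' ff' f'f] := f_bij.
by apply: (eq_bij (bij_comp gf_bij (Bijective f'f ff'))) => y /=; rewrite f'f.
Qed.

Definition horner_coords (F : finFieldType) (I : finType) (h : I -> {poly F})
    (u : {ffun I -> F}) : {ffun I -> F} :=
  [ffun i => (h i).[u i]].

Lemma horner_coords_bij (F : finFieldType) (I : finType) (h : I -> {poly F}) :
  bijective (horner_coords h) <-> (forall i, is_pp (h i)).
Proof.
split=> [[hinv hK _] i | h_bij].
  apply: injF_bij => x y hxy.
  pose e z : {ffun I -> F} := [ffun j => if j == i then z else 0].
  have : horner_coords h (e x) = horner_coords h (e y).
    by apply/ffunP => j; rewrite !ffunE; case: eqP => // ->.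
  by move=> /(congr1 hinv); rewrite !hK => /ffunP /(_ i); rewrite !ffunE eqxx.
apply: injF_bij => u u' /ffunP uu'; apply/ffunP => i.
by apply: (bij_inj (h_bij i)); have := uu' i; rewrite !ffunE.
Qed.

Section Coordinates.
Variables (F : finFieldType) (L : fieldExtType F) (n : nat).
Hypothesis dimL : \dim {:L} = n.
Local Notation K := (finvect_type L).
Local Notation V := {ffun 'I_n -> F}.

Lemma card_finvect_coords : #|K| = #|V|.
Proof. by rewrite card_ffun card_ord card_finvect dimL. Qed.

Lemma basis_of_fullvE (w : 'I_n -> L) :
  basis_of fullv [seq w i | i <- enum 'I_n] = free [tuple w i | i < n].
Proof.
have -> : [seq w i | i <- enum 'I_n] = [tuple w i | i < n] :> seq L by [].
by rewrite basisEfree subvf size_tuple dimL leqnn !andbT.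
Qed.

Lemma nth_mktuple (w : 'I_n -> L) (i : 'I_n) : [tuple w i | i < n]`_i = w i.
Proof. by rewrite -tnth_nth tnth_mktuple. Qed.

Definition lincomb (a : 'I_n -> L) (u : V) : K := \sum_i u i *: a i.

Lemma lincomb_bij a : bijective (lincomb a) <-> free [tuple a i | i < n].
Proof.
split=> [[ainv aK _] | a_free].
  apply/freeP => k k0 i.
  have : lincomb a [ffun j => k j] = lincomb a [ffun=> 0].
    rewrite {2}/lincomb big1 => [|j _]; last by rewrite ffunE scale0r.
    by rewrite -k0; apply: eq_bigr => j _; rewrite ffunE nth_mktuple.
  by move=> /(congr1 ainv); rewrite !aK => /ffunP /(_ i); rewrite !ffunE.
apply: inj_card_bij; last by rewrite card_finvect_coords.
move=> u u' uu'; apply/ffunP => i; apply/eqP; rewrite -subr_eq0; apply/eqP.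
have /freeP a_ind := a_free; move: i; apply: (a_ind (fun i => u i - u' i)).
under eq_bigr => i _ do rewrite nth_mktuple scalerBl.
by rewrite sumrB; apply/eqP; rewrite subr_eq0; apply/eqP.
Qed.

Definition tr_coords (v : 'I_n -> L) (y : K) : V := [ffun i => trF (v i * y)].

Lemma tr_coords_bij v : bijective (tr_coords v) <-> free [tuple v i | i < n].
Proof.
split=> [[vinv _ vK] | v_free].
  apply/freeP => k k0 j.
  pose e : V := [ffun i => (i == j)%:R].
  have /(congr1 (fun z => trF (z * vinv e))) := k0.
  rewrite /= mul0r linear0 mulr_suml linear_sum.
  under eq_bigr => i _ do rewrite nth_mktuple -scalerAl linearZ /=.
  have dual i : trF (v i * vinv e) = (i == j)%:R.
    by have /ffunP /(_ i) := vK e; rewrite !ffunE.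
  under eq_bigr => i _ do rewrite [trF _]dual.
  rewrite (bigD1 j) //= big1 ?addr0 => [|i /negPf ->]; last by rewrite scaler0.
  by rewrite eqxx => /eqP; rewrite scaler_eq0 oner_eq0 orbF => /eqP.
apply: inj_card_bij; last by rewrite card_finvect_coords.
move=> y y' /ffunP yy'; apply/eqP; rewrite -subr_eq0; apply/negPn/negP => d0.
have [w] := trF_nondegenerate d0.
have v_basis : basis_of fullv [tuple v i | i < n].
  by rewrite basisEfree v_free subvf size_tuple dimL leqnn.
have : w \in <<[tuple v i | i < n]>>%VS by rewrite (span_basis v_basis) memvf.
move=> /coord_span ->; rewrite mulr_suml linear_sum big1 ?eqxx // => i _.
rewrite nth_mktuple -scalerAl linearZ /= mulrBr linearB /=.
by have := yy' i; rewrite !ffunE => e; rewrite [trF _]e subrr scaler0.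
Qed.

End Coordinates.

Lemma horner_bigF (F : finFieldType) (L : fieldExtType F) (n : nat)
    (dimL : \dim {:L} = n) (f : {poly L}) (h : 'I_n -> {poly F}) (a v : 'I_n -> L)
    (y : L) :
  (bigF f h a v).[y] = lincomb a (horner_coords h (tr_coords v f.[y])).
Proof.
rewrite horner_sum; apply: eq_bigr => i _.
rewrite !ffunE hornerZ horner_comp horner_trP hornerZ -dimL -/(Tr _) -trFE.
by rewrite -[(trF _)%:A]/(in_alg L _) horner_map mulr_algr.
Qed.

Theorem theorem2p1 (F : finFieldType) (L : fieldExtType F) (n : nat)
    (hn : \dim {:L} = n) (f : {poly L}) (hf : is_pp f)
    (h : 'I_n -> {poly F}) (a v : 'I_n -> L) :
  is_pp (bigF f h a v) <->
  ((basis_of fullv [seq a i | i <- enum 'I_n] /\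
    basis_of fullv [seq v i | i <- enum 'I_n]) /\
   (forall i : 'I_n, is_pp (h i))).
Proof.
have eq_bigF : (fun x => (bigF f h a v).[x]) =1
    lincomb a \o horner_coords h \o tr_coords v \o (fun x : finvect_type L => f.[x]).
  by move=> y; rewrite /= (horner_bigF hn).
have cardLV := card_finvect_coords hn.
rewrite /is_pp !(basis_of_fullvE hn).
split=> [/eq_bij/(_ _ eq_bigF) | [[a_free v_free] h_pp]].
  move=> bigF_bij; have [AHT_bij _] := @bij_decomp_card (finvect_type L) _ _ _ _
    erefl (bigF_bij : @bijective (finvect_type L) (finvect_type L) _).
  have [AH_bij /(tr_coords_bij hn) v_free] := bij_decomp_card cardLV AHT_bij.
  by have [/(lincomb_bij hn) a_free /horner_coords_bij] := bij_decomp_card erefl AH_bij.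
apply/(eq_bij _ (fsym eq_bigF))/bij_comp => //.
apply/bij_comp; last exact/(tr_coords_bij hn).
by apply/bij_comp; [exact/(lincomb_bij hn) | exact/horner_coords_bij].
Qed.
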